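(* Let $G$ be a finite group and $N\unlhd G$ a normal subgroup. If $G$ is almost monomial, then the quotient group $G/N$ is almost monomial.
   Context: A finite group $G$ is called almost monomial if for every two distinct complex irreducible characters $\chi$ and $\psi$ of $G$ there exist a subgroup $H\le G$ and a linear (degree one) character $\varphi$ of $H$ such that the induced character $\operatorname{Ind}_H^G\varphi$ contains $\chi$ (i.e. $\langle \operatorname{Ind}_H^G\varphi,\chi\rangle\neq 0$) and does not contain $\psi$ (i.e. $\langle \operatorname{Ind}_H^G\varphi,\psi\rangle=0$), where $\langle\,,\rangle$ is the usual inner product of class functions. *)

From HB Require Import structures.
From mathcomp Require Import all_boot all_order all_algebra all_fingroup all_solvable all_field all_character.
Set Implicit Arguments. Unset Strict Implicit. Unset Printing Implicit Defensive.
Import GRing.Theory Num.Theory.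
Local Open Scope ring_scope.
Local Open Scope group_scope.

Definition almost_monomial (gT : finGroupType) (G : {group gT}) : Prop :=
  forall i j : Iirr G, i != j ->
    exists H : {group gT}, H \subset G /\
      exists phi : 'CF(H), phi \is a linear_char /\
        '['Ind[G] phi, 'chi_i] != 0 /\ '['Ind[G] phi, 'chi_j] = 0.

From mathcomp Require Import all_boot all_order all_algebra all_fingroup all_solvable all_field all_character.
Set Implicit Arguments. Unset Strict Implicit. Unset Printing Implicit Defensive.
Import GRing.Theory Num.Theory.
Local Open Scope ring_scope.
Local Open Scope group_scope.

(* Lift i != j in Irr(G/N) to their inflations in Irr(G) and take the witness
   (H, phi) given for G.  As 'chi_i %% N is a constituent of 'Ind phi,
   Frobenius reciprocity puts phi under 'Res[H] ('chi_i %% N), whose kernel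
   contains N :&: H; so phi factors through H/(N :&: H) ~ HN/N, i.e. phi is
   psi %% N for a linear character psi of H/N.  Inflation from G/N to G is an
   isometry commuting with restriction, so by Frobenius reciprocity again
   '['Ind psi, chi] = '['Ind phi, chi %% N] for every chi in 'CF(G/N). *)

Section Quotients.

Variable gT : finGroupType.
Implicit Types G H N : {group gT}.

Lemma cfker_sub_Ind_constt G H (phi : 'CF(H)) (chi : 'CF(G)) :
    H \subset G -> phi \in irr H -> chi \is a character ->
  '['Ind[G] phi, chi] != 0 -> H :&: cfker chi \subset cfker phi.
Proof.
move=> sHG /irrP[k ->] Nchi chi_phi.
rewrite -cfker_Res //; apply: cfker_constt; first exact: cfRes_char.
by rewrite irr_consttE cfdotC conjC_eq0 Frobenius_reciprocity.
Qed.

Lemma cfMod_onto H N (phi : 'CF(H)) :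
    H \subset 'N(N) -> N :&: H \subset cfker phi ->
  exists psi : 'CF(H / N), (psi %% N)%CF = phi.
Proof.
move=> nNH kerNH.
have nsNHH : N :&: H <| H by rewrite /normal subsetIr normsI ?normG.
have [f injf im_f] := second_isom nNH.
have isoF : isom (H / (N :&: H)) (H / N) f by apply/isomP; rewrite im_f.
have f_coset x : x \in H -> f (coset (N :&: H) x) = coset N x.
  move=> Hx; apply/set1_inj; rewrite -morphim_set1 ?mem_quotient //.
  rewrite -!quotient_set1 ?(subsetP nNH) ?(subsetP (normal_norm nsNHH)) //.
  by rewrite im_f ?sub1set.
exists (cfIsom isoF (phi / (N :&: H))%CF); apply/cfun_inP => x Hx.
by rewrite cfMorphE ?(subsetP nNH) //= -f_coset // cfIsomE ?mem_quotient ?cfQuoE.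
Qed.

Lemma cfdot_Ind_cfMod G H N (psi : 'CF(H / N)) (chi : 'CF(G / N)) :
    N <| G -> H \subset G ->
  '['Ind[G / N] psi, chi] = '['Ind[G] (psi %% N), chi %% N].
Proof.
move=> nsNG sHG; rewrite -!Frobenius_reciprocity (cfResMod _ sHG nsNG).
by rewrite cfMorph_iso // (subset_trans sHG (normal_norm nsNG)).
Qed.

End Quotients.

Theorem theorem2p2 (gT : finGroupType) (G N : {group gT}) :
  N <| G -> almost_monomial G -> almost_monomial (G / N)%G.
Proof.
move=> nsNG amG i j neq_ij.
have neq_mod_ij : mod_Iirr i != mod_Iirr j.
  by rewrite (inj_eq (can_inj (mod_IirrK nsNG))).
have [H [sHG [phi [lin_phi [Ind_i Ind_j]]]]] := amG _ _ neq_mod_ij.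
rewrite !mod_IirrE // in Ind_i Ind_j.
have nNH : H \subset 'N(N) := subset_trans sHG (normal_norm nsNG).
have kerNH : N :&: H \subset cfker phi.
  rewrite setIC; apply: subset_trans (cfker_sub_Ind_constt _ _ _ Ind_i) => //.
  - by rewrite setIS ?cfker_mod.
  - exact: lin_char_irr.
  - by rewrite cfMod_char ?irr_char.
have [psi Dphi] := cfMod_onto nNH kerNH.
exists (H / N)%G; split; first exact: quotientS.
exists psi; rewrite !cfdot_Ind_cfMod // Dphi; split=> //.
by rewrite -(cfMorph_lin_charE _ nNH); move: lin_phi; rewrite -Dphi.
Qed.
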